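(* Let $G$ be a finite group and let $\chi, \chi' \in \mathrm{Irr}(G)$. Then $\sum_{C \in \mathrm{Conj}(G)} |C|^2 \chi(C)\overline{\chi'(C)}$ is an integer divisible by $|Z(G)|$.
   Context: $\mathrm{Irr}(G)$ is the set of irreducible complex characters of $G$, $\mathrm{Conj}(G)$ the set of conjugacy classes, $|C|$ the size of class $C$, $\chi(C)$ the value of $\chi$ on $C$, and $Z(G)$ the centre of $G$. *)

From mathcomp Require Import all_boot all_order all_algebra all_fingroup all_solvable all_field all_character.
Set Implicit Arguments.
Unset Strict Implicit.
Unset Printing Implicit Defensive.

From mathcomp Require Import all_boot all_order all_algebra all_fingroup all_solvable all_field all_character.
From mathcomp Require Import ring.
Import GRing.Theory Num.Theory.

Set Implicit Arguments.
Unset Strict Implicit.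
Unset Printing Implicit Defensive.
Local Open Scope ring_scope.

(* Write S = \sum_(g in G) |g^G| chi(g) chi'(g^-1). Each term is an algebraic
   integer, since |g^G| chi(g) / chi(1) is one. An automorphism of algC acts on
   character values as g |-> g^k for some k coprime to |G|; this permutes G and
   preserves class sizes, so S is rational, hence an integer. A central z
   multiplies every term by the same scalar lambda(z) (chi and chi' are scalar
   on Z(G)); as translation by z permutes G, S = lambda(z) S, so lambda(z) = 1
   unless S = 0. The terms are then constant on the cosets of Z(G), and
   S / |Z(G)| is a rational sum of algebraic integers over coset representatives. *)

Lemma Crat_galois_fixed (Qn : splittingFieldType rat) (QnC : {rmorphism Qn -> algC}) a :
    galois 1 {:Qn} -> (forall nu : {rmorphism algC -> algC}, nu (QnC a) = QnC a) ->
  QnC a \in Crat.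
Proof.
move=> galQn QnC_fixed; suff /vlineP[q ->] : a \in 1%VS.
  by rewrite rmorphZ_num rmorph1 mulr1 Crat_rat.
rewrite -(galois_fixedField galQn); apply/fixedFieldP; first exact: memvf.
move=> s _; have [nu Dnu] := extend_algC_subfield_aut QnC s.
by apply: (fmorph_inj QnC); rewrite Dnu QnC_fixed.
Qed.

Section GroupSums.

Variables (gT : finGroupType) (G : {group gT}).

Lemma aut_char_expg (nu : {rmorphism algC -> algC}) :
  exists2 k, coprime #|G| k &
    forall (chi : 'CF(G)) x, chi \is a character -> x \in G ->
    nu (chi x) = chi (x ^+ k)%g.
Proof.
have [z prim_z] := C_prim_root_exists (cardG_gt0 G).
have prim_nuz : #|G|.-primitive_root (nu z) by rewrite fmorph_primitive_root.
have [k Dk] := prim_rootP prim_z (prim_expr_order prim_nuz).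
exists k; first by rewrite coprime_sym -(prim_root_exp_coprime k prim_z) -Dk.
have nu_unity y : y ^+ #|G| = 1 -> nu y = y ^+ k.
  by case/(prim_rootP prim_z) => m ->; rewrite rmorphXn Dk -!exprM mulnC.
move=> chi x Nchi Gx; have sXG : <[x]>%g \subset G by rewrite cycle_subG.
(* On <[x]> the character is a sum of linear ones, with values |G|-th roots of unity. *)
rewrite -!(cfResE chi sXG) ?mem_cycle ?cycle_id //.
have [r ->] := char_sum_irr (cfRes_char <[x]>%g Nchi).
rewrite !sum_cfunE rmorph_sum; apply: eq_bigr => t _.
have lin_t := irr_cyclic_lin t (cycle_cyclic x).
rewrite lin_charX ?cycle_id //; apply: nu_unity.
by rewrite -lin_charX ?cycle_id // expg_cardG // lin_char1.
Qed.

Lemma sum_expg_coprime (R : nmodType) (F : gT -> R) k :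
  coprime #|G| k -> \sum_(g in G) F (g ^+ k)%g = \sum_(g in G) F g.
Proof.
move=> coGk; have injXk : {in G &, injective (fun g => g ^+ k)%g}.
  exact: can_in_inj (expgK coGk).
rewrite -(big_imset F injXk) /=; apply: eq_bigl => h.
suff -> : [set (g ^+ k)%g | g in G] = G :> {set gT} by [].
apply/eqP; rewrite eqEcard card_in_imset // leqnn andbT.
by apply/subsetP=> _ /imsetP[g Gg ->]; rewrite groupX.
Qed.

Lemma sum_mulg_l (R : nmodType) (F : gT -> R) z :
  z \in G -> \sum_(g in G) F (z * g)%g = \sum_(g in G) F g.
Proof.
by move=> Gz; rewrite [RHS](reindex_inj (mulgI z)); apply: eq_bigl => g; rewrite /= groupMl.
Qed.

Lemma card_class_expg_coprime k g :
  coprime #|G| k -> g \in G -> #|(g ^+ k) ^: G|%g = #|g ^: G|%g.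
Proof.
move=> coGk Gg; have injXk : {in G &, injective (fun g => g ^+ k)%g}.
  exact: can_in_inj (expgK coGk).
have -> : ((g ^+ k) ^: G)%g = [set (h ^+ k)%g | h in (g ^: G)%g].
  by rewrite /class -imset_comp; apply: eq_imset => y /=; rewrite conjXg.
rewrite card_in_imset //; apply: sub_in2 injXk => _ /imsetP[y Gy ->].
by rewrite groupJ.
Qed.

Lemma card_class_mul_center z g :
  z \in 'Z(G)%g -> #|(z * g) ^: G|%g = #|g ^: G|%g.
Proof.
case/centerP=> _ cGz.
have -> : ((z * g) ^: G)%g = [set (z * h)%g | h in (g ^: G)%g].
  rewrite /class -imset_comp; apply: eq_in_imset => y Gy /=.
  have zJ : (z ^ y = z)%g by rewrite conjgE (cGz y Gy) mulKg.
  by rewrite conjMg zJ.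
by rewrite card_imset //; apply: mulgI.
Qed.

Lemma sum_rcosets_invariant (R : nmodType) (H : {group gT}) (F : gT -> R) :
    H \subset G -> {in H & G, forall h g, F (h * g)%g = F g} ->
  \sum_(g in G) F g = (\sum_(A in rcosets H G) F (repr A)) *+ #|H|.
Proof.
move=> sHG FH; have partHG := rcosets_partition_mul G H.
rewrite mulSGid // in partHG.
have -> : \sum_(g in G) F g = \sum_(g in cover (rcosets H G)) F g.
  by rewrite (cover_partition partHG).
rewrite big_trivIset; last by case/and3P: partHG.
rewrite -sumrMnl; apply: eq_bigr => _ /rcosetsP[x Gx ->].
have Fx g : g \in (H :* x)%g -> F g = F x.
  by rewrite mem_rcoset => Hgx; rewrite -[g](mulgKV x) FH.
by rewrite (eq_bigr _ Fx) sumr_const card_rcoset Fx ?mem_repr_rcoset.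
Qed.

Lemma cfcenter_charM (chi : 'CF(G)) z g :
    chi \is a character -> z \in ('Z(chi))%CF -> g \in G ->
  chi (z * g)%g = chi z / chi 1%g * chi g.
Proof.
move=> Nchi; have [-> | nz_chi] := eqVneq chi 0; first by rewrite !cfunE !mul0r.
rewrite -(char1_eq0 Nchi) in nz_chi; case/char_reprP: Nchi nz_chi => rG -> nz_chi.
rewrite cfcenter_repr => /setIdP[Gz /is_scalar_mxP[c rGz]] Gg.
have rG_zM h : h \in G -> cfRepr rG (z * h)%g = c * cfRepr rG h.
  move=> Gh; rewrite !cfunE groupM // Gh !mulr1n repr_mxM // rGz.
  by rewrite mul_scalar_mx mxtraceZ.
have rG_z : cfRepr rG z = c * cfRepr rG 1%g by rewrite -rG_zM ?mulg1.
by rewrite rG_zM // rG_z mulfK.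
Qed.

Lemma center_sub_cfcenter_irr (i : Iirr G) : 'Z(G)%g \subset ('Z('chi_i))%CF.
Proof. by rewrite -cap_cfcenter_irr; apply: bigcap_inf. Qed.

End GroupSums.

Section ClassWeightedIrrProduct.

Variables (gT : finGroupType) (G : {group gT}) (i j : Iirr G).

Let f g := #|(g ^: G)%g|%:R * 'chi_i g * 'chi_j (g^-1)%g.

Lemma sum_classes_irr_prod :
  \sum_(C in classes G) #|C|%:R ^+ 2 * 'chi_i (repr C) * ('chi_j (repr C))^*
    = \sum_(g in G) f g.
Proof.
rewrite sum_by_classes => [|g h Gg Gh]; last first.
  by rewrite /f classGidl // -conjVg !cfunJ.
apply: eq_bigr => C /repr_classesP[_ DC].
by rewrite /f -DC irr_inv expr2 !mulrA.
Qed.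

Lemma Aint_class_irr_prod g : g \in G -> f g \in Aint.
Proof.
move=> Gg; have nz_chi1 : 'chi_i 1%g != 0 by rewrite irr1_neq0.
rewrite /f rpredM ?Aint_irr // -[_ * _](divfK nz_chi1).
by rewrite rpredM ?Aint_class_div_irr1 ?Aint_Cnat ?Cnat_irr1.
Qed.

Lemma aut_sum_class_irr_prod (nu : {rmorphism algC -> algC}) :
  nu (\sum_(g in G) f g) = \sum_(g in G) f g.
Proof.
have [k coGk nu_chi] := aut_char_expg G nu.
rewrite rmorph_sum -[RHS](sum_expg_coprime _ coGk); apply: eq_bigr => g Gg.
rewrite /f !rmorphM rmorph_nat !nu_chi ?irr_char ?groupV //.
by rewrite card_class_expg_coprime // expgVn.
Qed.

Lemma Crat_sum_class_irr_prod : \sum_(g in G) f g \in Crat.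
Proof.
have [Qn galQn [QnC _ [_ _ QnG]]] := group_num_field_exists G.
have [a Da] : exists a, QnC a = \sum_(g in G) f g.
  apply: (big_ind (fun x => exists a, QnC a = x)) => [|_ _ [a <-] [b <-]|g Gg].
  - by exists 0; rewrite rmorph0.
  - by exists (a + b); rewrite rmorphD.
  have [b Db] := QnG _ G _ (irr_char i) g (order_dvdG Gg).
  have [c Dc] := QnG _ G _ (irr_char j) (g^-1)%g (order_dvdG (groupVr Gg)).
  by exists (#|(g ^: G)%g|%:R * b * c); rewrite !rmorphM rmorph_nat Db Dc.
by rewrite -Da; apply: Crat_galois_fixed => // nu; rewrite Da aut_sum_class_irr_prod.
Qed.

Lemma Cint_sum_class_irr_prod : \sum_(g in G) f g \in Num.int.
Proof.
rewrite Cint_rat_Aint ?Crat_sum_class_irr_prod // rpred_sum // => g.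
exact: Aint_class_irr_prod.
Qed.

Lemma class_irr_prod_center_mul z g : z \in 'Z(G)%g -> g \in G ->
  f (z * g)%g = 'chi_i z / 'chi_i 1%g * ('chi_j (z^-1)%g / 'chi_j 1%g) * f g.
Proof.
move=> Zz Gg; have Zz' : (z^-1 \in 'Z(G))%g by rewrite groupV.
have cfZ k y : y \in 'Z(G)%g -> y \in ('Z('chi[G]_k))%CF.
  exact/subsetP/center_sub_cfcenter_irr.
rewrite /f card_class_mul_center //.
have -> : ((z * g)^-1 = z^-1 * g^-1)%g.
  by rewrite invMg; case/centerP: Zz' => _ /(_ _ (groupVr Gg)) ->.
rewrite !cfcenter_charM ?irr_char ?cfZ ?groupV //.
ring.
Qed.

Lemma class_irr_prod_center_invariant :
  \sum_(h in G) f h != 0 -> {in 'Z(G)%g & G, forall z g, f (z * g)%g = f g}.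
Proof.
move=> nz_sum z g Zz Gg; have Gz : z \in G := subsetP (center_sub G) z Zz.
suff lambda1 : 'chi_i z / 'chi_i 1%g * ('chi_j (z^-1)%g / 'chi_j 1%g) = 1.
  by rewrite class_irr_prod_center_mul // lambda1 mul1r.
apply: (mulIf nz_sum); rewrite mul1r -[RHS](sum_mulg_l _ Gz) mulr_sumr.
by apply: eq_bigr => h Gh; rewrite class_irr_prod_center_mul.
Qed.

Lemma dvdC_center_sum_class_irr_prod :
  (#|'Z(G)%g|%:R %| \sum_(g in G) f g)%C.
Proof.
have [-> | nz_sum] := eqVneq (\sum_(g in G) f g) 0; first exact: dvdC0.
have ZG := center_sub G.
have def_sum := sum_rcosets_invariant ZG (class_irr_prod_center_invariant nz_sum).
set s := \sum_(A in rcosets _ _) _ in def_sum.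
have nzZ : #|'Z(G)%g|%:R != 0 :> algC by rewrite pnatr_eq0 -lt0n cardG_gt0.
apply/dvdCP; exists s; last by rewrite def_sum mulr_natr.
apply: Cint_rat_Aint.
  have -> : s = (\sum_(g in G) f g) / #|'Z(G)%g|%:R.
    by rewrite def_sum -[s *+ _]mulr_natr mulfK.
  by rewrite rpred_div ?rpred_nat ?Crat_sum_class_irr_prod.
rewrite rpred_sum // => _ /rcosetsP[x Gx ->]; apply: Aint_class_irr_prod.
have := mem_repr_rcoset 'Z(G) x; rewrite mem_rcoset => /(subsetP ZG) Gyx.
by rewrite -[repr _](mulgKV x) groupM.
Qed.

End ClassWeightedIrrProduct.

Theorem proposition3p2 (gT : finGroupType) (G : {group gT}) (i j : Iirr G) :
  let S := \sum_(C in classes G)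
             (#|C|%:R) ^+ 2 * 'chi_i (repr C) * ('chi_j (repr C))^* in
  S \in Num.int /\ (#|('Z(G))%g|%:R %| S)%C.
Proof.
rewrite /= sum_classes_irr_prod.
split; [exact: Cint_sum_class_irr_prod | exact: dvdC_center_sum_class_irr_prod].
Qed.
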